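(* Let $F$ be a field and let $M$ be a root-closed Puiseux monoid. Then $F[M]$ is a U-UFD: whenever $g_1\cdots g_k=h_1\cdots h_\ell$ with all $g_i,h_j$ irreducible in $F[M]$, one has $k=\ell$ and there is a permutation $\sigma$ of $\{1,\dots,k\}$ such that $g_i$ and $h_{\sigma(i)}$ are associates for every $i$.
   Context: A Puiseux monoid is an additive submonoid of $(\mathbb{Q}_{\ge 0},+)$; $F[M]$ is its semigroup algebra over $F$ (finite formal sums $\sum_{s\in M} f(s)X^s$ with $X^sX^t=X^{s+t}$), an integral domain with units $F^\times$. $\mathsf{gp}(M)=\{x-y\mid x,y\in M\}$; $x\in\mathsf{gp}(M)$ is a root element if $nx\in M$ for some $n\in\mathbb{N}$; $M$ is root-closed if all root elements lie in $M$. An integral domain is an unrestricted unique factorization domain (U-UFD) if every element that admits a factorization into irreducibles has a unique such factorization up to order and associates. *)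

From HB Require Import structures.
From mathcomp Require Import all_boot all_order all_algebra.
Set Implicit Arguments. Unset Strict Implicit. Unset Printing Implicit Defensive.
Import Order.TTheory GRing.Theory Num.Theory.
Local Open Scope ring_scope.

Definition puiseux_monoid (M : rat -> Prop) : Prop :=
  [/\ M 0, (forall x y, M x -> M y -> M (x + y)) & (forall x, M x -> 0 <= x)].

Definition in_gp (M : rat -> Prop) (x : rat) : Prop :=
  exists a b, [/\ M a, M b & x = a - b].

Definition root_element (M : rat -> Prop) (x : rat) : Prop :=
  in_gp M x /\ exists n : nat, (0 < n)%N /\ M (x *+ n).

Definition root_closed (M : rat -> Prop) : Prop :=
  forall x, root_element M x -> M x.

(* An element of F[M] is represented by a finite list of terms
   (exponent, coefficient), i.e. the formal sum  sum_t t.2 X^(t.1),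
   all of whose exponents lie in M.  Two representations denote the same
   element iff they have the same coefficient function. *)
Section SemigroupAlgebra.
Variable F : fieldType.

Definition fm := seq (rat * F).

Definition fm_coef (p : fm) (q : rat) : F := \sum_(t <- p | t.1 == q) t.2.

Definition in_FM (M : rat -> Prop) (p : fm) : Prop :=
  forall t, t \in p -> M t.1.

Definition fm_eq (p q : fm) : Prop := forall x, fm_coef p x = fm_coef q x.

Definition fm_zero : fm := [::].
Definition fm_one : fm := [:: (0, 1)].

(* X^a X^b = X^(a+b), extended bilinearly *)
Definition fm_mul (p q : fm) : fm :=
  [seq (a.1 + b.1, a.2 * b.2) | a <- p, b <- q].

Definition fm_prod (s : seq fm) : fm := foldr fm_mul fm_one s.

Definition fm_unit (M : rat -> Prop) (p : fm) : Prop :=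
  in_FM M p /\ exists q, in_FM M q /\ fm_eq (fm_mul p q) fm_one.

Definition fm_irreducible (M : rat -> Prop) (p : fm) : Prop :=
  [/\ in_FM M p, ~ fm_eq p fm_zero, ~ fm_unit M p &
      forall g h, in_FM M g -> in_FM M h -> fm_eq p (fm_mul g h) ->
        fm_unit M g \/ fm_unit M h].

Definition fm_associated (M : rat -> Prop) (p q : fm) : Prop :=
  exists u, fm_unit M u /\ fm_eq p (fm_mul u q).

End SemigroupAlgebra.

(* Only finitely many exponents occur in a factorization, so they all lie in
   (1/D)N for a common denominator D.  The elements of gp(M) in (1/D)Z form a
   cyclic group with a positive generator c, and every exponent is a multiple
   of c.  Since an irreducible has a positive exponent, some positive multiple
   of c lies in M, so c is a root element and c lies in M by root-closedness.
   Thus all factors live in F[cN] <= F[M], which is the polynomial ring F[X]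
   under X^(cn) |-> X^n.  Units of F[M] are constants, so irreducibles of F[M]
   are irreducible in F[X], and unique factorization in F[X] gives the
   result. *)
From HB Require Import structures.
From mathcomp Require Import all_boot all_order all_algebra.
From mathcomp Require Import ring.
From Stdlib Require Import Classical.
Set Implicit Arguments. Unset Strict Implicit. Unset Printing Implicit Defensive.
Import Order.TTheory GRing.Theory Num.Theory.
Local Open Scope ring_scope.

Section PolyUniqueFactorization.
Variable F : fieldType.

Lemma irreducible_dvdp_prod (p : {poly F}) n (h : 'I_n -> {poly F}) :
  irreducible_poly p -> p %| \prod_(j < n) h j -> exists j, p %| h j.
Proof.
move=> p_irr; elim: n h => [|n IH] h.
  by rewrite big_ord0 dvdp1 => /eqP p_size1; case: p_irr; rewrite p_size1.
rewrite big_ord_recl => p_dvd.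
have [|p_ndvd] := boolP (p %| h ord0); first by exists ord0.
rewrite Gauss_dvdpr ?irreducible_poly_coprime // in p_dvd.
by have [j hj] := IH _ p_dvd; exists (lift ord0 j).
Qed.

Lemma poly_unique_factorization k l (g : 'I_k -> {poly F}) (h : 'I_l -> {poly F}) :
  (forall i, irreducible_poly (g i)) -> (forall j, irreducible_poly (h j)) ->
  \prod_i g i %= \prod_j h j ->
  k = l /\ exists sigma : 'I_k -> 'I_l,
    bijective sigma /\ forall i, g i %= h (sigma i).
Proof.
elim: k l g h => [|k IH] l g h g_irr h_irr.
  rewrite big_ord0; case: l h h_irr => [|l] h h_irr e.
    by split=> //; exists id; split; [exact: injF_bij | case].
  have : h ord0 %| 1.
    by rewrite (eqp_dvdr _ e) big_ord_recl dvdp_mulr ?dvdpp.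
  by rewrite dvdp1 => /eqP h0_size1; case: (h_irr ord0); rewrite h0_size1.
move=> e.
have : g ord0 %| \prod_j h j.
  by rewrite -(eqp_dvdr _ e) big_ord_recl dvdp_mulr ?dvdpp.
move=> /(irreducible_dvdp_prod (g_irr ord0)) [j0 g0_dvd].
have g0_h : g ord0 %= h j0.
  apply: (apply_irredp (h_irr j0) _ g0_dvd).
  by case: (g_irr ord0) => size_gt1 _; rewrite gtn_eqF.
case: l h h_irr e j0 g0_dvd g0_h => [|l] h h_irr e j0; first by case: j0.
move=> g0_dvd g0_h.
rewrite big_ord_recl (bigD1_ord j0) //= in e.
have e' : \prod_(i < k) g (lift ord0 i) %= \prod_(i < l) h (lift j0 i).
  rewrite -(eqp_mul2l _ _ (irredp_neq0 (g_irr ord0))); apply: eqp_trans e _.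
  rewrite eqp_mul2r 1?eqp_sym // prodf_seq_neq0.
  by apply/allP => i _; exact: irredp_neq0.
have [kl [s' [s'_bij s'_assoc]]] := IH l _ _ (fun i => g_irr _) (fun j => h_irr _) e'.
subst l; split=> //.
pose sigma (i : 'I_k.+1) := if unlift ord0 i is Some i' then lift j0 (s' i') else j0.
exists sigma; split=> [|i]; last by rewrite /sigma; case: unliftP => [i'|] ->.
apply: injF_bij => i1 i2; rewrite /sigma.
case: (unliftP ord0 i1) => [i1'|] ->; case: (unliftP ord0 i2) => [i2'|] -> //.
- by move/lift_inj/(bij_inj s'_bij) => ->.
- by move/esym/eqP; rewrite (negbTE (neq_lift _ _)).
- by move/eqP; rewrite (negbTE (neq_lift _ _)).
Qed.

End PolyUniqueFactorization.

Lemma modn_closed_divisor (S : nat -> Prop) m0 :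
  (forall a b, S a -> S b -> S (a %% b)%N) -> (0 < m0)%N -> S m0 ->
  exists d, [/\ (0 < d)%N, S d & forall m, S m -> (d %| m)%N].
Proof.
move=> S_mod; elim/ltn_ind: m0 => m0 IH m0_gt0 S_m0.
have [m0_dvd|] := classic (forall m, S m -> (m0 %| m)%N); first by exists m0.
move=> /not_all_ex_not [m] /(@imply_to_and (S m)) [S_m m0_ndvd].
apply: (IH (m %% m0)%N (ltn_pmod _ m0_gt0)); last exact: S_mod.
by rewrite lt0n; apply/negP => /eqP mod0; apply: m0_ndvd; rewrite /dvdn mod0.
Qed.

Lemma common_denominator (xs : seq rat) : (forall x, x \in xs -> 0 <= x) ->
  exists2 D : nat, (0 < D)%N & forall x, x \in xs -> exists n : nat, x = n%:R / D%:R.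
Proof.
elim: xs => [|x xs IH] xs_ge0; first by exists 1%N.
have [D D_gt0 xsD] : exists2 D : nat, (0 < D)%N &
    forall y, y \in xs -> exists n : nat, y = n%:R / D%:R.
  by apply: IH => y y_xs; apply: xs_ge0; rewrite inE y_xs orbT.
have x_ge0 : 0 <= x by apply: xs_ge0; rewrite mem_head.
have natz (z : int) : 0 <= z -> ((`|z|%N)%:R : rat) = z%:~R.
  by move=> z_ge0; rewrite -{2}(gez0_abs z_ge0) pmulrn.
pose d := `|denq x|%N.
have dE : (d%:R : rat) = (denq x)%:~R by rewrite natz // ltW // denq_gt0.
have nE : ((`|numq x|%N)%:R : rat) = (numq x)%:~R by rewrite natz // numq_ge0.
have D_neq0 : (D%:R : rat) != 0 by rewrite pnatr_eq0 -lt0n.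
have d_neq0 : (d%:R : rat) != 0 by rewrite dE intr_eq0 denq_neq0.
exists (D * d)%N; first by rewrite muln_gt0 D_gt0 lt0n -(eqr_nat rat) d_neq0.
move=> y; rewrite inE => /orP [/eqP ->|y_xs].
  exists (`|numq x| * D)%N; rewrite !natrM -{1}[x]divq_num_den -nE -dE.
  by field; apply/andP.
have [n ->] := xsD y y_xs; exists (n * d)%N.
by rewrite !natrM; field; apply/andP.
Qed.

Lemma fm_coefE (F : fieldType) (p : fm F) x :
  fm_coef p x = \sum_(t <- p) (if t.1 == x then t.2 else 0).
Proof. by rewrite /fm_coef big_mkcond. Qed.

Section Grid.
Variable F : fieldType.
Variable c : rat.
Hypothesis c_gt0 : 0 < c.

Definition fm_on_grid (p : fm F) := forall t, t \in p -> exists n : nat, t.1 = c * n%:R.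

Definition grid_index (x : rat) : nat := Num.truncn (x / c).

Definition fm_poly (p : fm F) : {poly F} := \sum_(t <- p) t.2 *: 'X^(grid_index t.1).

Definition poly_fm (A : {poly F}) : fm F :=
  [seq (c * i%:R, A`_i) | i <- index_iota 0 (size A)].

Let c_neq0 : c != 0. Proof. by rewrite gt_eqF. Qed.

Lemma grid_indexK n : grid_index (c * n%:R) = n.
Proof.
by rewrite /grid_index [c * _]mulrC mulfK // (truncn_def (n := n)) // lexx ltr_nat ltnSn.
Qed.

Lemma coef_fm_poly p n : fm_on_grid p -> (fm_poly p)`_n = fm_coef p (c * n%:R).
Proof.
move=> p_grid; rewrite /fm_poly coef_sum fm_coefE; apply: eq_big_seq => t tp.
have [m ->] := p_grid t tp.
rewrite coefZ coefXn grid_indexK (inj_eq (mulfI c_neq0)) eqr_nat mulr_natr.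
by rewrite eq_sym; case: eqP.
Qed.

Lemma fm_coef_off_grid p x : fm_on_grid p -> x / c \isn't a Num.nat -> fm_coef p x = 0.
Proof.
move=> p_grid x_off; rewrite fm_coefE big1_seq // => t /andP [_ tp].
have [m t_m] := p_grid t tp; case: eqP => // t_x.
by move: x_off; rewrite -t_x t_m [c * _]mulrC mulfK // natr_nat.
Qed.

Lemma fm_eq_fm_poly p q : fm_on_grid p -> fm_on_grid q ->
  fm_eq p q <-> fm_poly p = fm_poly q.
Proof.
move=> p_grid q_grid; split => [e|e x].
  by apply/polyP => n; rewrite !coef_fm_poly // e.
have [x_nat|x_off] := boolP (x / c \is a Num.nat); last by rewrite !fm_coef_off_grid.
by rewrite -[x](divfK c_neq0) -(truncnK x_nat) mulrC -!coef_fm_poly // e.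
Qed.

Lemma fm_on_grid_mul p q : fm_on_grid p -> fm_on_grid q -> fm_on_grid (fm_mul p q).
Proof.
move=> p_grid q_grid t /allpairsP [[a b] [/= ap bq ->]] /=.
have [m ->] := p_grid a ap; have [n ->] := q_grid b bq.
by exists (m + n)%N; rewrite natrD mulrDr.
Qed.

Lemma fm_poly_mul p q : fm_on_grid p -> fm_on_grid q ->
  fm_poly (fm_mul p q) = fm_poly p * fm_poly q.
Proof.
move=> p_grid q_grid; rewrite /fm_poly /fm_mul big_allpairs_dep /= mulr_suml.
apply: eq_big_seq => a ap; rewrite mulr_sumr; apply: eq_big_seq => b bq /=.
have [m ->] := p_grid a ap; have [n ->] := q_grid b bq.
by rewrite -mulrDr -natrD !grid_indexK exprD -scalerAl -scalerAr scalerA mulrC.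
Qed.

Lemma fm_on_grid_const a : fm_on_grid [:: (0, a)].
Proof. by move=> t; rewrite inE => /eqP -> /=; exists 0%N; rewrite mulr0. Qed.

Lemma fm_poly_const a : fm_poly [:: (0, a)] = a%:P.
Proof.
rewrite /fm_poly big_seq1 /= -[0](mulr0 c) -[0%R]/(0%:R) grid_indexK.
by rewrite expr0 alg_polyC.
Qed.

Lemma fm_on_grid_prod (I : Type) (r : seq I) (f : I -> fm F) :
  (forall i, fm_on_grid (f i)) -> fm_on_grid (fm_prod (map f r)).
Proof.
move=> f_grid; elim: r => [|i r IH]; first exact: fm_on_grid_const.
exact: fm_on_grid_mul.
Qed.

Lemma fm_poly_prod (I : Type) (r : seq I) (f : I -> fm F) :
  (forall i, fm_on_grid (f i)) ->
  fm_poly (fm_prod (map f r)) = \prod_(i <- r) fm_poly (f i).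
Proof.
move=> f_grid; elim: r => [|i r IH]; first by rewrite big_nil fm_poly_const.
by rewrite big_cons /= fm_poly_mul ?IH //; exact: fm_on_grid_prod.
Qed.

Lemma fm_on_grid_poly_fm A : fm_on_grid (poly_fm A).
Proof. by move=> t /mapP [i _ ->]; exists i. Qed.

Lemma poly_fmK : cancel poly_fm fm_poly.
Proof.
move=> A; rewrite /fm_poly /poly_fm big_map -[RHS]coefK poly_def.
by rewrite big_mkord; apply: eq_bigr => i _; rewrite grid_indexK.
Qed.

End Grid.

Section PuiseuxMonoid.
Variable M : rat -> Prop.
Hypothesis hM : puiseux_monoid M.

Lemma puiseux_monoid0 : M 0. Proof. by case: hM. Qed.

Lemma puiseux_monoidD x y : M x -> M y -> M (x + y).
Proof. by case: hM => _ + _; apply. Qed.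

Lemma puiseux_monoid_ge0 x : M x -> 0 <= x.
Proof. by case: hM => _ _; apply. Qed.

Lemma puiseux_monoidMn x n : M x -> M (x *+ n).
Proof.
move=> Mx; elim: n => [|n IH]; first exact: puiseux_monoid0.
by rewrite mulrS; apply: puiseux_monoidD.
Qed.

Lemma in_gp_monoid x : M x -> in_gp M x.
Proof. by move=> Mx; exists x, 0; rewrite subr0; split=> //; exact: puiseux_monoid0. Qed.

Lemma in_gpB x y : in_gp M x -> in_gp M y -> in_gp M (x - y).
Proof.
move=> [a [b [Ma Mb ->]]] [a' [b' [Ma' Mb' ->]]].
by exists (a + b'), (b + a'); split; [exact: puiseux_monoidD.. | ring].
Qed.

Lemma in_gpD x y : in_gp M x -> in_gp M y -> in_gp M (x + y).
Proof.
move=> [a [b [Ma Mb ->]]] [a' [b' [Ma' Mb' ->]]].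
by exists (a + a'), (b + b'); split; [exact: puiseux_monoidD.. | ring].
Qed.

Lemma in_gpMn x n : in_gp M x -> in_gp M (x *+ n).
Proof.
move=> gp_x; elim: n => [|n IH]; first by apply: in_gp_monoid; exact: puiseux_monoid0.
by rewrite mulrS; apply: in_gpD.
Qed.

Lemma gp_grid_generator (D m0 : nat) :
  (0 < m0)%N -> in_gp M (m0%:R / D%:R) ->
  exists d : nat, [/\ (0 < d)%N, in_gp M (d%:R / D%:R) &
    forall m : nat, in_gp M (m%:R / D%:R) -> (d %| m)%N].
Proof.
apply: modn_closed_divisor => a b gp_a gp_b.
have -> : (a %% b)%N%:R / D%:R = a%:R / D%:R - (b%:R / D%:R) *+ (a %/ b) :> rat.
  by rewrite {2}(divn_eq a b) natrD natrM; ring.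
by apply: in_gpB => //; apply: in_gpMn.
Qed.

End PuiseuxMonoid.

Section PuiseuxAlgebra.
Variable F : fieldType.
Variable M : rat -> Prop.
Hypothesis hM : puiseux_monoid M.

Lemma in_FM_const (a : F) : in_FM M [:: (0, a)].
Proof. by move=> t; rewrite inE => /eqP ->; exact: puiseux_monoid0. Qed.

Lemma in_FM_poly_fm c (A : {poly F}) : M c -> in_FM M (poly_fm c A).
Proof. by move=> Mc t /mapP [i _ ->]; rewrite mulr_natr; exact: puiseux_monoidMn. Qed.

Lemma fm_exponents_common_denominator (ps : seq (fm F)) :
  (forall p, p \in ps -> in_FM M p) ->
  exists2 D : nat, (0 < D)%N &
    forall p t, p \in ps -> t \in p -> exists n : nat, t.1 = n%:R / D%:R.
Proof.
move=> ps_M; have [|D D_gt0 xsD] := @common_denominator [seq t.1 | t <- flatten ps].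
  move=> x /mapP [t /flattenP [p pp tp] ->].
  by apply: (puiseux_monoid_ge0 hM); exact: ps_M tp.
by exists D => // p t pp tp; apply: xsD; apply: map_f; apply/flattenP; exists p.
Qed.

Lemma fm_common_grid (ps : seq (fm F)) : (forall p, p \in ps -> in_FM M p) ->
  exists2 c, 0 < c & forall p, p \in ps -> fm_on_grid c p.
Proof.
move=> /fm_exponents_common_denominator [D D_gt0 psD].
exists D%:R^-1; first by rewrite invr_gt0 ltr0n.
by move=> p pp t tp; have [n ->] := psD p t pp tp; exists n; rewrite mulrC.
Qed.

Lemma fm_unit_eq_const (p : fm F) : fm_unit M p -> exists2 a, a != 0 & fm_eq p [:: (0, a)].
Proof.
move=> [p_M [q [q_M pq1]]].
have [|c c_gt0 grid] := @fm_common_grid [:: p; q].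
  by move=> r; rewrite !inE => /orP [] /eqP ->.
have p_grid : fm_on_grid c p by apply: grid; rewrite mem_head.
have q_grid : fm_on_grid c q by apply: grid; rewrite !inE eqxx orbT.
have : fm_poly c p * fm_poly c q = 1.
  rewrite -fm_poly_mul // -polyC1 -(fm_poly_const c_gt0); apply/(fm_eq_fm_poly c_gt0) => //.
    exact: fm_on_grid_mul.
  exact: fm_on_grid_const.
move=> pq_poly1.
have : fm_poly c p \is a GRing.unit by apply/unitrPr; exists (fm_poly c q).
rewrite poly_unitE => /andP [/eqP p_size1 p0_unit].
exists (fm_poly c p)`_0; first by rewrite -unitfE.
apply/(fm_eq_fm_poly c_gt0) => //; first exact: fm_on_grid_const.
by rewrite fm_poly_const // -size1_polyC // p_size1.
Qed.

Section FixedGrid.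
Variable c : rat.
Hypothesis c_gt0 : 0 < c.

Lemma fm_unit_of_fm_poly_const (p : fm F) a : fm_on_grid c p -> in_FM M p ->
  fm_poly c p = a%:P -> a != 0 -> fm_unit M p.
Proof.
move=> p_grid p_M p_a a_neq0; split=> //; exists [:: (0, a^-1)].
split; first exact: in_FM_const.
apply/(fm_eq_fm_poly c_gt0); [exact/fm_on_grid_mul/fm_on_grid_const | exact: fm_on_grid_const|].
rewrite fm_poly_mul //; last exact: fm_on_grid_const.
by rewrite /fm_one p_a !fm_poly_const // -polyCM mulfV.
Qed.

Lemma fm_unit_poly_fm (A : {poly F}) : fm_unit M (poly_fm c A) ->
  exists2 a, a != 0 & A = a%:P.
Proof.
move=> /fm_unit_eq_const [a a_neq0 A_a]; exists a => //.
move/(fm_eq_fm_poly c_gt0 (@fm_on_grid_poly_fm F c A) (@fm_on_grid_const F c a)): A_a.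
by rewrite poly_fmK // fm_poly_const.
Qed.

Lemma fm_irreducible_size_fm_poly (p : fm F) : fm_on_grid c p -> fm_irreducible M p ->
  (1 < size (fm_poly c p))%N.
Proof.
move=> p_grid [p_M p_neq0 p_nunit _]; rewrite ltnNge; apply/negP => /size1_polyC p_const.
have [p0_eq0|p0_neq0] := eqVneq (fm_poly c p)`_0 0.
  apply: p_neq0; apply/(fm_eq_fm_poly c_gt0) => //.
  by rewrite p_const p0_eq0 /fm_poly big_nil.
exact: p_nunit (fm_unit_of_fm_poly_const p_grid p_M p_const p0_neq0).
Qed.

Lemma irreducible_fm_poly (p : fm F) : M c -> fm_on_grid c p -> fm_irreducible M p ->
  irreducible_poly (fm_poly c p).
Proof.
move=> Mc p_grid p_irr; split; first exact: fm_irreducible_size_fm_poly.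
move=> q q_size /dvdpP [r p_rq]; case: p_irr => _ _ _ /(_ (poly_fm c r) (poly_fm c q)).
case=> [||| /fm_unit_poly_fm [a a_neq0 r_a] | /fm_unit_poly_fm [a a_neq0 q_a]].
- exact: in_FM_poly_fm.
- exact: in_FM_poly_fm.
- have rq_grid := fm_on_grid_mul (@fm_on_grid_poly_fm F c r) (@fm_on_grid_poly_fm F c q).
  apply/(fm_eq_fm_poly c_gt0 p_grid rq_grid).
  by rewrite fm_poly_mul // ?(poly_fmK c_gt0) //; exact: fm_on_grid_poly_fm.
- by rewrite p_rq r_a mul_polyC eqp_sym eqp_scale.
- by move: q_size; rewrite q_a size_polyC a_neq0.
Qed.

Lemma fm_associated_of_eqp (p q : fm F) : fm_on_grid c p -> fm_on_grid c q ->
  fm_poly c p %= fm_poly c q -> fm_associated M p q.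
Proof.
move=> p_grid q_grid /eqpP [[a b] /andP [/= a_neq0 b_neq0] ab_pq].
exists [:: (0, b / a)]; split.
  apply: (fm_unit_of_fm_poly_const _ _ (fm_poly_const c_gt0 (b / a))).
  - exact: fm_on_grid_const.
  - exact: in_FM_const.
  - by rewrite mulf_neq0 ?invr_eq0.
apply/(fm_eq_fm_poly c_gt0 p_grid (fm_on_grid_mul (@fm_on_grid_const F c (b / a)) q_grid)).
rewrite fm_poly_mul //; last exact: fm_on_grid_const.
rewrite fm_poly_const // mul_polyC.
by rewrite -[fm_poly c p]scale1r -(mulVf a_neq0) -scalerA ab_pq scalerA mulrC.
Qed.

End FixedGrid.

Lemma fm_irreducible_exponent_gt0 (p : fm F) : fm_irreducible M p ->
  exists2 t, t \in p & 0 < t.1.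
Proof.
move=> p_irr; apply: NNPP => no_pos.
have p0 t : t \in p -> t.1 = 0.
  move=> tp; apply/eqP; rewrite eq_le (puiseux_monoid_ge0 hM) ?andbT; last first.
    by case: p_irr => + _ _ _; apply.
  by rewrite leNgt; apply/negP => t_gt0; apply: no_pos; exists t.
have p_grid : fm_on_grid 1 p by move=> t tp; exists 0%N; rewrite p0 // mulr0.
have := fm_irreducible_size_fm_poly ltr01 p_grid p_irr.
have -> : fm_poly 1 p = (\sum_(t <- p) t.2)%:P.
  rewrite /fm_poly rmorph_sum; apply: eq_big_seq => t tp.
  have -> : t.1 = 1 * 0%:R by rewrite p0 // mulr0.
  by rewrite grid_indexK ?ltr01 // expr0 alg_polyC.
by rewrite size_polyC ltnNge leq_b1.
Qed.

Section RootClosed.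
Hypothesis hrc : root_closed M.

Lemma fm_irreducibles_on_grid (ps : seq (fm F)) p0 : p0 \in ps ->
  (forall p, p \in ps -> fm_irreducible M p) ->
  exists c, [/\ 0 < c, M c & forall p, p \in ps -> fm_on_grid c p].
Proof.
move=> p0_ps ps_irr.
have ps_M p : p \in ps -> in_FM M p by move=> /ps_irr [].
have [D D_gt0 psD] := fm_exponents_common_denominator ps_M.
have D_neq0 : D%:R != 0 :> rat by rewrite pnatr_eq0 -lt0n.
have gp_exponent p t : p \in ps -> t \in p -> in_gp M t.1.
  by move=> pp tp; apply: (in_gp_monoid hM); exact: ps_M tp.
have [t0 t0_p0 t0_gt0] := fm_irreducible_exponent_gt0 (ps_irr _ p0_ps).
have [m0 t0_m0] := psD _ _ p0_ps t0_p0.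
have m0_gt0 : (0 < m0)%N.
  by rewrite lt0n; apply: contraTneq t0_gt0 => m0_eq0; rewrite t0_m0 m0_eq0 mul0r ltxx.
have gp_m0 : in_gp M (m0%:R / D%:R) by rewrite -t0_m0; exact: gp_exponent p0_ps t0_p0.
have [d [d_gt0 gp_d d_dvd]] := gp_grid_generator hM m0_gt0 gp_m0.
have on_grid p : p \in ps -> fm_on_grid (d%:R / D%:R) p.
  move=> pp t tp; have [m t_m] := psD _ _ pp tp; exists (m %/ d)%N.
  have /d_dvd d_m : in_gp M (m%:R / D%:R) by rewrite -t_m; exact: gp_exponent pp tp.
  by rewrite t_m -{1}(divnK d_m) natrM; field.
have [n t0_n] := on_grid _ p0_ps _ t0_p0.
exists (d%:R / D%:R); split=> //; first by rewrite divr_gt0 ?ltr0n.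
apply: hrc; split=> //; exists n; split.
  by rewrite lt0n; apply: contraTneq t0_gt0 => n_eq0; rewrite t0_n n_eq0 mulr0 ltxx.
by rewrite -[_ *+ n]mulr_natr -t0_n; exact: ps_M t0_p0.
Qed.

End RootClosed.

End PuiseuxAlgebra.

Theorem mainTheorem17 (F : fieldType) (M : rat -> Prop)
  (hM : puiseux_monoid M) (hrc : root_closed M)
  (k l : nat) (g : 'I_k -> fm F) (h : 'I_l -> fm F)
  (hg : forall i, fm_irreducible M (g i)) (hh : forall j, fm_irreducible M (h j))
  (heq : fm_eq (fm_prod (map g (enum 'I_k))) (fm_prod (map h (enum 'I_l)))) :
  k = l /\ exists sigma : 'I_k -> 'I_l,
    bijective sigma /\ forall i, fm_associated M (g i) (h (sigma i)).
Proof.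
pose ps := map g (enum 'I_k) ++ map h (enum 'I_l).
have ps_irr p : p \in ps -> fm_irreducible M p by rewrite mem_cat => /orP [] /mapP [i _ ->].
have [ps_nil|[p0 p0_ps]] : ps = [::] \/ exists p0, p0 \in ps.
  by case: (ps) => [|p0 ?]; [left | right; exists p0; rewrite mem_head].
  move/(congr1 size): ps_nil; rewrite size_cat !size_map -!enumT !size_enum_ord.
  move=> /eqP; rewrite addn_eq0 => /andP [/eqP k0 /eqP l0]; subst k l.
  by split=> //; exists id; split; [exact: injF_bij | case].
have [c [c_gt0 Mc ps_grid]] := fm_irreducibles_on_grid hM hrc p0_ps ps_irr.
have g_grid i : fm_on_grid c (g i) by apply: ps_grid; rewrite mem_cat map_f ?mem_enum.
have h_grid j : fm_on_grid c (h j).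
  by apply: ps_grid; rewrite mem_cat map_f ?mem_enum ?orbT.
have gh_poly : \prod_i fm_poly c (g i) %= \prod_j fm_poly c (h j).
  have gh_iff := fm_eq_fm_poly c_gt0
    (fm_on_grid_prod (r := enum 'I_k) g_grid) (fm_on_grid_prod (r := enum 'I_l) h_grid).
  have := gh_iff.1 heq.
  by rewrite !fm_poly_prod // !big_enum => ->; exact: eqpxx.
have [kl [sigma [sigma_bij g_h]]] := poly_unique_factorization
  (fun i => irreducible_fm_poly hM c_gt0 Mc (g_grid i) (hg i))
  (fun j => irreducible_fm_poly hM c_gt0 Mc (h_grid j) (hh j)) gh_poly.
split=> //; exists sigma; split=> // i.
exact (fm_associated_of_eqp hM c_gt0 (g_grid i) (h_grid (sigma i)) (g_h i)).
Qed.
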